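(* Let $\mathbb{Y},\mathbb{T}$ be sets, let $\underline{\mathsf{P}}_{Y,\Theta}$ be a coherent lower prevision on the bounded gambles on $\mathbb{Y}\times\mathbb{T}$ with conjugate upper prevision $\overline{\mathsf{P}}_{Y,\Theta}$, and let $y\mapsto(\underline{\Pi}_y,\overline{\Pi}_y)$ be an inferential model. Suppose the IM is valid, i.e., $$\overline{\mathsf{P}}_{Y,\Theta}\bigl(\{(y,\theta):\underline{\Pi}_y(H)>1-\alpha,\ \theta\notin H\}\bigr)\le\alpha\quad\text{for all }H\subseteq\mathbb{T},\ \alpha\in[0,1].$$ Then there is no sure-loss relative to the prior assessments: $\inf_{y\in\mathbb{Y}}\underline{\Pi}_y(H)\le\overline{\mathsf{P}}_\Theta(H)$ for all $H\subseteq\mathbb{T}$, where $\overline{\mathsf{P}}_\Theta(H)=\overline{\mathsf{P}}_{Y,\Theta}(\mathbb{Y}\times H)$.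
   Context: A lower prevision $\underline{\mathsf{P}}$ on the linear space of bounded gambles on a set $\Omega$ is coherent if for all integers $m,K\ge0$ and all bounded gambles $f_0,\dots,f_K$, $\sup_{\omega}\bigl[\sum_{k=1}^K\{f_k(\omega)-\underline{\mathsf{P}}(f_k)\}-m\{f_0(\omega)-\underline{\mathsf{P}}(f_0)\}\bigr]\ge0$; its conjugate upper prevision is $\overline{\mathsf{P}}(f)=-\underline{\mathsf{P}}(-f)$, and for a set $B$, $\underline{\mathsf{P}}(B)=\underline{\mathsf{P}}(1_B)$, $\overline{\mathsf{P}}(B)=\overline{\mathsf{P}}(1_B)$. An inferential model (IM) is a map $y\mapsto(\underline{\Pi}_y,\overline{\Pi}_y)$ assigning to each $y\in\mathbb{Y}$ a coherent lower prevision $\underline{\Pi}_y$ (with conjugate upper prevision $\overline{\Pi}_y$) on bounded gambles on $\mathbb{T}$; $\underline{\Pi}_y(H)=\underline{\Pi}_y(1_H)$ for $H\subseteq\mathbb{T}$. *)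

From Stdlib Require Import Reals List ClassicalDescription.
Open Scope R_scope.

Definition bounded {Omega : Type} (f : Omega -> R) : Prop :=
  exists M : R, forall w, Rabs (f w) <= M.

(* sup_w g w >= 0   (sup of an empty set is -oo, so this then fails) *)
Definition sup_ge0 {Omega : Type} (g : Omega -> R) : Prop :=
  forall eps : R, 0 < eps -> exists w, - eps < g w.

Definition inf_le {I : Type} (g : I -> R) (c : R) : Prop :=
  forall eps : R, 0 < eps -> exists y, g y < c + eps.

Definition sum1 (K : nat) (g : nat -> R) : R :=
  fold_right Rplus 0 (map g (seq 1 K)).

(* Coherence of a lower prevision P on the bounded gambles on Omega.
   P is given as a map on all functions; only its values on bounded
   gambles matter. *)
Definition coherent {Omega : Type} (P : (Omega -> R) -> R) : Prop :=
  forall (m K : nat) (f : nat -> Omega -> R),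
    (forall k, (k <= K)%nat -> bounded (f k)) ->
    sup_ge0 (fun w => sum1 K (fun k => f k w - P (f k))
                      - INR m * (f 0%nat w - P (f 0%nat))).

Definition upper {Omega : Type} (P : (Omega -> R) -> R) (f : Omega -> R) : R :=
  - P (fun w => - f w).

Definition indicator {Omega : Type} (B : Omega -> Prop) : Omega -> R :=
  fun w => if excluded_middle_informative (B w) then 1 else 0.

Definition is_IM {Y T : Type} (Pi : Y -> (T -> R) -> R) : Prop :=
  forall y, coherent (Pi y).

Definition valid_IM {Y T : Type} (PYT : (Y * T -> R) -> R)
    (Pi : Y -> (T -> R) -> R) : Prop :=
  forall (H : T -> Prop) (alpha : R), 0 <= alpha <= 1 ->
    upper PYT (indicator (fun p : Y * T =>
       Pi (fst p) (indicator H) > 1 - alpha /\ ~ H (snd p))) <= alpha.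

(* If inf_y Pi_y(H) exceeded U := upper P(Y x H) by some eps > 0, take
   alpha := 1 - U - eps/2.  Then Pi_y(H) > 1 - alpha for every y, so the
   validity event for (H, alpha) is all of Y x (not H).  Since Y x H and
   Y x (not H) cover Y x T, coherence gives U + upper P(Y x (not H)) >= 1,
   i.e. the upper probability of the validity event is at least 1 - U > alpha,
   contradicting validity. *)
From Pilot Require Import Defs.
From Stdlib Require Import Reals List Lra Classical ClassicalDescription.
Open Scope R_scope.

Lemma fold_right_Rplus_map_minus {A : Type} (a b : A -> R) (l : list A) :
  fold_right Rplus 0 (map (fun x => a x - b x) l) =
  fold_right Rplus 0 (map a l) - fold_right Rplus 0 (map b l).
Proof. induction l as [|x l IH]; simpl; [lra | rewrite IH; lra]. Qed.

Lemma sum1_minus (K : nat) (a b : nat -> R) :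
  sum1 K (fun k => a k - b k) = sum1 K a - sum1 K b.
Proof. apply fold_right_Rplus_map_minus. Qed.

Lemma indicator_01 {Omega : Type} (B : Omega -> Prop) (w : Omega) :
  0 <= indicator B w <= 1.
Proof. unfold indicator; destruct excluded_middle_informative; lra. Qed.

(* [Defs.bounded] is qualified throughout: [Reals] exports an unrelated [bounded]. *)
Lemma bounded_indicator {Omega : Type} (B : Omega -> Prop) : Defs.bounded (indicator B).
Proof.
  exists 1; intro w; pose proof (indicator_01 B w).
  rewrite Rabs_right; lra.
Qed.

Lemma bounded_opp {Omega : Type} (g : Omega -> R) :
  Defs.bounded g -> Defs.bounded (fun w => - g w).
Proof. intros [M HM]; exists M; intro w; rewrite Rabs_Ropp; apply HM. Qed.

Section Coherence.

Context {Omega : Type} (P : (Omega -> R) -> R) (HP : coherent P).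

Lemma coherent_inhabited : inhabited Omega.
Proof.
  assert (Hb : forall k, (k <= 0)%nat -> Defs.bounded (fun _ : Omega => 0)).
  { intros k _; exists 0; intro w; rewrite Rabs_R0; lra. }
  destruct (HP 0%nat 0%nat (fun _ _ => 0) Hb 1 Rlt_0_1) as [w _].
  exact (inhabits w).
Qed.

(* The case m = 0 of coherence: avoiding sure loss. *)
Lemma coherent_sum_le_ub (K : nat) (f : nat -> Omega -> R) (c : R) :
  (forall k, (k <= K)%nat -> Defs.bounded (f k)) ->
  (forall w, sum1 K (fun k => f k w) <= c) ->
  sum1 K (fun k => P (f k)) <= c.
Proof.
  intros Hb Hc.
  apply Rnot_lt_le; intro Hlt.
  destruct (HP 0%nat K f Hb (sum1 K (fun k => P (f k)) - c)) as [w Hw]; [lra|].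
  rewrite sum1_minus in Hw; simpl in Hw.
  specialize (Hc w); lra.
Qed.

Lemma coherent_le_ub (g : Omega -> R) (c : R) :
  Defs.bounded g -> (forall w, g w <= c) -> P g <= c.
Proof.
  intros Hb Hc.
  replace (P g) with (sum1 1 (fun _ => P g)) by (cbn; lra).
  apply coherent_sum_le_ub; [intros; exact Hb | intro w; cbn; specialize (Hc w); lra].
Qed.

Lemma coherent_add_le_ub (g1 g2 : Omega -> R) (c : R) :
  Defs.bounded g1 -> Defs.bounded g2 -> (forall w, g1 w + g2 w <= c) -> P g1 + P g2 <= c.
Proof.
  intros Hb1 Hb2 Hc.
  set (f k := if Nat.eqb k 2 then g2 else g1).
  replace (P g1 + P g2) with (sum1 2 (fun k => P (f k))) by (cbn; lra).
  apply coherent_sum_le_ub.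
  - intros [|[|[|k]]] _; assumption.
  - intro w; cbn; specialize (Hc w); lra.
Qed.

Lemma coherent_indicator_le1 (B : Omega -> Prop) : P (indicator B) <= 1.
Proof.
  apply coherent_le_ub; [apply bounded_indicator | apply indicator_01].
Qed.

Lemma upper_indicator_ge0 (B : Omega -> Prop) : 0 <= upper P (indicator B).
Proof.
  unfold upper.
  enough (P (fun w => - indicator B w) <= 0) by lra.
  apply coherent_le_ub.
  - apply bounded_opp, bounded_indicator.
  - intro w; pose proof (indicator_01 B w); lra.
Qed.

Lemma upper_indicator_cover (A B : Omega -> Prop) :
  (forall w, A w \/ B w) -> 1 <= upper P (indicator A) + upper P (indicator B).
Proof.
  intro Hcov; unfold upper.
  enough (P (fun w => - indicator A w) + P (fun w => - indicator B w) <= -1) by lra.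
  apply coherent_add_le_ub; try apply bounded_opp, bounded_indicator.
  intro w; unfold indicator.
  destruct (Hcov w);
    do 2 destruct excluded_middle_informative; solve [lra | contradiction].
Qed.

End Coherence.

Theorem proposition2 (Y T : Type) (PYT : (Y * T -> R) -> R)
  (Pi : Y -> (T -> R) -> R) :
  coherent PYT -> is_IM Pi -> valid_IM PYT Pi ->
  forall H : T -> Prop,
    inf_le (fun y => Pi y (indicator H))
           (upper PYT (indicator (fun p : Y * T => H (snd p)))).
Proof.
  intros HP HIM HV H eps Heps.
  set (U := upper PYT (indicator (fun p : Y * T => H (snd p)))).
  apply NNPP; intro Hno.
  assert (Hall : forall y, U + eps <= Pi y (indicator H)).
  { intro y; apply Rnot_lt_le; intro Hlt; apply Hno; now exists y. }
  (* Any y gives U + eps <= Pi y (indicator H) <= 1, whence 0 <= alpha below. *)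
  destruct (coherent_inhabited PYT HP) as [[y0 _]].
  assert (HU : 0 <= U) by exact (upper_indicator_ge0 PYT HP _).
  assert (Hy0 := Hall y0).
  assert (Hle1 := coherent_indicator_le1 (Pi y0) (HIM y0) H).
  set (alpha := 1 - U - eps / 2).
  assert (Halpha : 0 <= alpha <= 1) by (unfold alpha; lra).
  specialize (HV H alpha Halpha).
  assert (Hcover : 1 <= U + upper PYT (indicator (fun p : Y * T =>
            Pi (fst p) (indicator H) > 1 - alpha /\ ~ H (snd p)))).
  { apply (upper_indicator_cover PYT HP); intros [y t]; simpl.
    destruct (classic (H t)); [now left|].
    right; split; [pose proof (Hall y); unfold alpha; lra | assumption]. }
  unfold alpha in *; lra.
Qed.
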